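(* Let $d$ be even and $n\ge d+1$. Then: (i) if $n=d+1$, $C^d_n=A_n$; (ii) if $n=d+2$ and $\frac d2$ is even, $C^d_n=(A_n\cap(S_{n/2}\times S_{n/2}))\rtimes\langle s\rangle$; (iii) if $n=d+2$ and $\frac d2$ is odd, $C^d_n=\ker\phi$, where $\phi:(S_{n/2}\times S_{n/2})\rtimes\langle s\rangle\to\{-1,1\}$ is given by $\phi((\omega,\pi)s^{\varepsilon})=\operatorname{sgn}(\omega)\operatorname{sgn}(\pi)(-1)^{\varepsilon}$; (iv) if $n\ge d+3$ and $\frac d2$ is even, $C^d_n$ is isomorphic to the dihedral group $\mathbb D_n$ of order $2n$; (v) if $n\ge d+3$ and $\frac d2$ is odd, $C^d_n\cong\mathbb Z/n$.
   Context: For $n\ge d+1$, let $C^d_n\subseteq S_n$ be the subgroup of permutations $\sigma$ with the following property: for all $x_1,\dots,x_n\in\mathbb R^d$ such that the $(d+1)\times n$ matrix with columns $\binom{1}{x_1},\dots,\binom{1}{x_n}$ has all maximal minors positive, the matrix with columns $\binom{1}{x_{\sigma(1)}},\dots,\binom{1}{x_{\sigma(n)}}$ also has all maximal minors positive. $A_n$ is the alternating group. For even $n$: - $S_{n/2}\times S_{n/2}\subseteq S_n$ is the subgroup of permutations that map even indices to even indices and odd indices to odd indices. Its elements are written $(\omega,\pi)$, where $\omega$ permutes the even indices and $\pi$ the odd ones. - $s\in S_n$ is the order-reversing permutation $i\mapsto n+1-i$. - $(S_{n/2}\times S_{n/2})\rtimes\langle s\rangle$ is the subgroup of $S_n$ they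 generate; every element is uniquely of the form $(\omega,\pi)s^{\varepsilon}$ with $\varepsilon\in\{0,1\}$. *)

From HB Require Import structures.
From mathcomp Require Import all_boot all_order all_algebra all_fingroup all_solvable.
From mathcomp Require Import boolp reals.
Set Implicit Arguments. Unset Strict Implicit. Unset Printing Implicit Defensive.
Import Order.TTheory GRing.Theory Num.Theory.
Local Open Scope ring_scope.

(* The (d+1) x n matrix with columns (1; x_j), for x : 'M_(d, n) (column j = x_j). *)
Definition augmented (R : nzRingType) (d n : nat) (x : 'M[R]_(d, n)) : 'M[R]_(d.+1, n) :=
  col_mx (const_mx 1 : 'M[R]_(1, n)) x.

Definition all_max_minors_pos (R : realDomainType) (m n : nat) (M : 'M[R]_(m, n)) : Prop :=
  forall f : 'I_m -> 'I_n, (forall i j : 'I_m, (i < j)%N -> (f i < f j)%N) ->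
    0 < \det (colsub f M).

Definition permute_cols (R : nzRingType) (d n : nat) (sigma : 'S_n) (x : 'M[R]_(d, n))
  : 'M[R]_(d, n) := colsub (fun j => sigma j) x.

Definition Cdn (R : realType) (d n : nat) : {set 'S_n} :=
  [set sigma : 'S_n | `[< forall x : 'M[R]_(d, n),
      all_max_minors_pos (augmented x) ->
      all_max_minors_pos (augmented (permute_cols sigma x)) >] ].

(* S_{n/2} x S_{n/2}: permutations preserving the parity of indices. *)
Definition SS (n : nat) : {set 'S_n} :=
  [set sigma : 'S_n | [forall i : 'I_n, odd (sigma i) == odd i]].

(* The order-reversing permutation i |-> n+1-i (0-based: i |-> n-1-i). *)
Definition srev (n : nat) : 'S_n := perm (@rev_ord_inj n).

Definition SSs (n : nat) : {set 'S_n} := (SS n * <[srev n]>)%g.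

(* Components of tau in S_{n/2} x S_{n/2}: omega acts on the 1-based even
   indices (0-based odd), pi on the 1-based odd indices (0-based even);
   each is extended by the identity, which does not change its sign. *)
Definition omega_part (n : nat) (tau : 'S_n) : 'S_n :=
  restr_perm [set i : 'I_n | odd i] tau.
Definition pi_part (n : nat) (tau : 'S_n) : 'S_n :=
  restr_perm [set i : 'I_n | ~~ odd i] tau.

(* phi((omega,pi) s^eps) = sgn(omega) sgn(pi) (-1)^eps, encoded as a parity bit
   (true = -1).  For sigma in SSs: eps = 0 iff sigma in SS, and then
   (omega,pi) = sigma s^eps. *)
Definition phi_odd (n : nat) (sigma : 'S_n) : bool :=
  let eps := sigma \notin SS n in
  let tau := if eps then (sigma * (srev n)^-1)%g else sigma in
  odd_perm (omega_part tau) (+) odd_perm (pi_part tau) (+) eps.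

Definition ker_phi (n : nat) : {set 'S_n} :=
  [set sigma in SSs n | ~~ phi_odd sigma].

From HB Require Import structures.
From mathcomp Require Import all_boot all_order all_algebra all_fingroup all_solvable.
From mathcomp Require Import boolp reals.
From mathcomp Require Import zify.
Set Implicit Arguments. Unset Strict Implicit. Unset Printing Implicit Defensive.
Import Order.TTheory GRing.Theory Num.Theory.

(* For any configuration with positive maximal minors, the minor on columns
   h(0), ..., h(d) has the sign (-1)^(number of inversions of h); on the moment
   curve these minors are Vandermonde determinants.  Hence sigma lies in C^d_n
   iff it has an even number of inversions on every (d+1)-subset of indices.
   For n = d+1 this says that sigma is even.  For n = d+2, deleting the index a
   changes the inversion count by the parity of a + sigma(a), so sigma must
   shift every parity by sgn sigma.  For n >= d+3, two (d+1)-sets that differ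
   only by exchanging consecutive indices a, a+1 show that every d-set avoiding
   a and a+1 has an even number of elements y with sigma(y) strictly between
   sigma(a) and sigma(a+1); this forces sigma(a), sigma(a+1) to be cyclically
   adjacent, so sigma is a rotation or a rotation followed by the reversal s.
   Rotations have an even number of inversions on every set of odd size, and
   composing with s turns k inversions on a (d+1)-set into C(d+1, 2) - k, where
   C(d+1, 2) is even exactly when d/2 is even. *)

(** * Signs of maximal minors *)

Definition odd_inv m n (h : 'I_m -> 'I_n) : bool :=
  \big[addb/false]_(i < m) \big[addb/false]_(j < m) ((i < j)%N && (h j < h i)%N).

Lemma ord_homo_mono m n (g : 'I_m -> 'I_n) :
  {homo g : i j / (i < j)%N} -> {mono g : i j / (i < j)%N}.
Proof.
move=> gI i j; case: (ltngtP i j) => [/gI // | /gI gji | /val_inj ->]; last by rewrite ltnn.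
by apply/negbTE; rewrite -leqNgt ltnW.
Qed.

Lemma ord_homo_inj m n (g : 'I_m -> 'I_n) : {homo g : i j / (i < j)%N} -> injective g.
Proof.
move=> /ord_homo_mono gM i j gij; apply: val_inj.
by case: (ltngtP i j) => //; rewrite -gM gij ltnn.
Qed.

Lemma odd_inv_homo_comp k m n (g : 'I_m -> 'I_n) (f : 'I_k -> 'I_m) :
  {homo g : i j / (i < j)%N} -> odd_inv (g \o f) = odd_inv f.
Proof.
move=> /ord_homo_mono gM.
by apply: eq_bigr => i _; apply: eq_bigr => j _; rewrite /= gM.
Qed.

Lemma enum_ltn_sorted n (A : {set 'I_n}) : sorted (fun x y : 'I_n => (x < y)%N) (enum A).
Proof.
rewrite /enum_mem; apply: sorted_filter; first exact: ltn_trans.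
by have := iota_ltn_sorted 0 n; rewrite -val_enum_ord sorted_map enumT.
Qed.

Lemma increasing_enum m n (A : {set 'I_n}) : #|A| = m.+1 ->
  exists2 g : 'I_m.+1 -> 'I_n, {homo g : i j / (i < j)%N} & A = [set g i | i : 'I_m.+1].
Proof.
move=> cA; have /card_gt0P [x0 _] : (0 < #|A|)%N by rewrite cA.
have size_enum : size (enum A) = m.+1 by rewrite -cardE.
exists (fun i => nth x0 (enum A) i).
  have lt_trans : transitive (fun x y : 'I_n => (x < y)%N) by move=> ? ? ?; apply: ltn_trans.
  by move=> i j; apply: (sorted_ltn_nth lt_trans x0 (enum_ltn_sorted A)); rewrite inE size_enum.
apply/setP => x; apply/idP/imsetP => [xA | [i _ ->]]; last by rewrite -mem_enum mem_nth ?size_enum.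
have ix : (index x (enum A) < m.+1)%N by rewrite -size_enum index_mem mem_enum.
by exists (Ordinal ix); rewrite //= nth_index ?mem_enum.
Qed.

Lemma inj_homo_perm_factor m n (h : 'I_m -> 'I_n) : injective h ->
  exists2 g : 'I_m -> 'I_n, {homo g : i j / (i < j)%N} & exists p : 'S_m, h = g \o p.
Proof.
case: m => [|m] in h *; first by exists h => [[] | ]; last by exists 1%g; apply: funext => -[].
move=> hI; have [g gI Ag] : exists2 g : 'I_m.+1 -> 'I_n,
    {homo g : i j / (i < j)%N} & [set h i | i : 'I_m.+1] = [set g i | i : 'I_m.+1].
  by apply: increasing_enum; rewrite card_imset ?card_ord.
pose r i := odflt i [pick j | g j == h i].
have gr i : g (r i) = h i.
  rewrite /r; case: pickP => [j /eqP // | none].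
  have : h i \in [set g j | j : 'I_m.+1] by rewrite -Ag imset_f.
  by case/imsetP => j _ hij; have := none j; rewrite hij eqxx.
have rI : injective r by move=> i j rij; apply: hI; rewrite -!gr rij.
by exists g => //; exists (perm rI); apply: funext => i; rewrite /= permE gr.
Qed.

Section Minors.
Local Open Scope ring_scope.

Lemma big_signr (R : pzRingType) (I : Type) (r : seq I) (P : pred I) (b : I -> bool) :
  \prod_(i <- r | P i) ((-1) ^+ b i : R) = (-1) ^+ (\big[addb/false]_(i <- r | P i) b i).
Proof. by elim/big_rec2: _ => // i x y _ ->; rewrite signr_addb. Qed.

Lemma Vandermonde_gt0 (R : realDomainType) m (t : 'I_m -> R) : injective t ->
  (0 < \det (Vandermonde m (\row_j t j))) =
  ~~ \big[addb/false]_(i < m) \big[addb/false]_(j < m) ((i < j)%N && (t j < t i)).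
Proof.
move=> tI; rewrite det_Vandermonde.
have sign_norm i j : (\row_j t j) 0 j - (\row_j t j) 0 i
    = (-1) ^+ (t j < t i)%R * `|t j - t i|.
  by rewrite !mxE; case: ltrP => _; rewrite ?expr1 ?mulN1r ?opprB ?expr0 ?mul1r.
under eq_bigr do under eq_bigr do rewrite sign_norm.
under eq_bigr do rewrite big_split /= big_signr.
rewrite big_split /= big_signr.
have norm_gt0 : 0 < \prod_(i < m) \prod_(j < m | (i < j)%N) `|t j - t i|.
  apply: prodr_gt0 => i _; apply: prodr_gt0 => j ij.
  by rewrite normr_gt0 subr_eq0 (inj_eq tI); apply: contraTneq ij => ->; rewrite ltnn.
have -> : \big[addb/false]_(i < m) \big[addb/false]_(j < m | (i < j)%N) (t j < t i)
    = \big[addb/false]_(i < m) \big[addb/false]_(j < m) ((i < j)%N && (t j < t i)).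
  by apply: eq_bigr => i _; rewrite big_mkcond; apply: eq_bigr => j _; case: ifP.
case: (\big[addb/false]_(i < m) _); last by rewrite expr0 mul1r.
by rewrite expr1 mulN1r oppr_gt0 ltNge ltW.
Qed.

Lemma odd_inv_perm m (s : 'S_m) : odd_inv s = odd_perm s.
Proof.
pose t (j : 'I_m) : rat := (j : nat)%:R.
have tI : injective t by move=> i j /eqP; rewrite eqr_nat => /eqP /val_inj.
have V_gt0 : 0 < \det (Vandermonde m (\row_j t j)).
  rewrite Vandermonde_gt0 //; apply/negP; rewrite big1 // => i _; rewrite big1 // => j _.
  by rewrite ltr_nat; case: (ltngtP i j).
have Vs_gt0 : (0 < \det (Vandermonde m (\row_j t (s j)))) = ~~ odd_inv s.
  rewrite Vandermonde_gt0; last by move=> i j /tI /perm_inj.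
  by congr (~~ _); apply: eq_bigr => i _; apply: eq_bigr => j _; rewrite ltr_nat.
have perm_V : Vandermonde m (\row_j t (s j)) = col_perm s (Vandermonde m (\row_j t j)).
  by apply/matrixP => i j; rewrite !mxE.
move: Vs_gt0; rewrite perm_V col_permE det_mulmx det_perm odd_permV.
case: (odd_perm s) => /=; last by rewrite mulr1 V_gt0; case: (odd_inv s).
by rewrite expr1 mulrN1 oppr_gt0 ltNge ltW //; case: (odd_inv s).
Qed.

Lemma det_colsub_gt0 (R : realDomainType) m n (M : 'M[R]_(m, n)) (h : 'I_m -> 'I_n) :
  all_max_minors_pos M -> injective h -> (0 < \det (colsub h M)) = ~~ odd_inv h.
Proof.
move=> Mpos /inj_homo_perm_factor [g gI [p ->]].
have -> : colsub (g \o p) M = col_perm p (colsub g M) by apply/matrixP => i j; rewrite !mxE.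
rewrite col_permE det_mulmx det_perm odd_permV odd_inv_homo_comp // odd_inv_perm.
have := Mpos g gI; case: (odd_perm p) => /= M_gt0; last by rewrite expr0 mulr1.
by rewrite expr1 mulrN1 oppr_gt0 ltNge ltW.
Qed.

Definition moment_curve (R : nzRingType) d n : 'M[R]_(d, n) :=
  \matrix_(i < d, j < n) (j : nat)%:R ^+ i.+1.

Lemma moment_curve_pos (R : realDomainType) d n :
  all_max_minors_pos (augmented (moment_curve R d n)).
Proof.
move=> f fI; pose t j : R := (f j : nat)%:R.
have -> : colsub f (augmented (moment_curve R d n)) = Vandermonde d.+1 (\row_j t j).
  apply/matrixP => i j; rewrite /augmented !mxE.
  by case: splitP => k /= => [| ->]; [rewrite ord1 => ->; rewrite !mxE expr0 | rewrite !mxE].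
rewrite Vandermonde_gt0; last first.
  by move=> i j /eqP; rewrite eqr_nat => /eqP /val_inj /(ord_homo_inj fI).
apply/negP; rewrite big1 // => i _; rewrite big1 // => j _.
by rewrite ltr_nat (ord_homo_mono fI); case: (ltngtP i j).
Qed.

End Minors.

Definition odd_inv_on n (s : 'S_n) (I : {set 'I_n}) : bool :=
  \big[addb/false]_(x in I) \big[addb/false]_(y in I) ((x < y)%N && (s y < s x)%N).

Definition even_on_subsets d n (s : 'S_n) : bool :=
  [forall (I : {set 'I_n} | #|I| == d.+1), ~~ odd_inv_on s I].

Lemma odd_inv_on_homo m n (s : 'S_n) (g : 'I_m -> 'I_n) : {homo g : i j / (i < j)%N} ->
  odd_inv_on s [set g i | i : 'I_m] = odd_inv (s \o g).
Proof.
move=> gI; have gM := ord_homo_mono gI; have gJ := ord_homo_inj gI.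
rewrite /odd_inv_on big_imset /=; last by move=> i j _ _ /gJ.
apply: eq_bigr => i _; rewrite big_imset /=; last by move=> i' j _ _ /gJ.
by apply: eq_bigr => j _; rewrite gM.
Qed.

Lemma mem_Cdn (R : realType) d n (s : 'S_n) : (s \in Cdn R d n) = even_on_subsets d s.
Proof.
have colsub_perm (x : 'M[R]_(d, n)) (g : 'I_d.+1 -> 'I_n) :
    colsub g (augmented (permute_cols s x)) = colsub (s \o g) (augmented x).
  by apply/matrixP => i j; rewrite /augmented /permute_cols !mxE; case: splitP => k _; rewrite !mxE.
have sgI (g : 'I_d.+1 -> 'I_n) : {homo g : i j / (i < j)%N} -> injective (s \o g).
  by move=> /ord_homo_inj gI; apply: inj_comp gI; apply: perm_inj.
rewrite inE; apply/asboolP/forall_inP => [Cs I /eqP /increasing_enum [g gI ->] | Es x xpos g gI].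
  rewrite odd_inv_on_homo // -(det_colsub_gt0 (@moment_curve_pos R d n) (sgI g gI)).
  by rewrite -colsub_perm; apply: Cs => //; apply: moment_curve_pos.
rewrite colsub_perm (det_colsub_gt0 xpos (sgI g gI)) -(odd_inv_on_homo s gI); apply: Es.
by rewrite card_imset ?card_ord //; apply: ord_homo_inj.
Qed.

(** * The cases n = d + 1 and n = d + 2 *)

Lemma odd_sum (I : Type) (r : seq I) (P : pred I) (F : I -> nat) :
  odd (\sum_(i <- r | P i) F i) = \big[addb/false]_(i <- r | P i) odd (F i).
Proof. by elim/big_rec2: _ => // i x y _ <-; rewrite oddD. Qed.

Lemma sum_ltn_pairs n (I : {set 'I_n}) : \sum_(x in I) \sum_(y in I) (x < y) = 'C(#|I|, 2).
Proof.
set S := LHS.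
have trichotomy (x y : 'I_n) : (x < y) + (y < x) + (x == y) = 1.
  by rewrite -val_eqE /=; case: ltngtP.
have diag x : x \in I -> \sum_(y in I) (x == y) = 1.
  by move=> xI; rewrite (bigD1 x) //= eqxx big1 // => y /andP [_]; rewrite eq_sym => /negbTE ->.
have : \sum_(x in I) \sum_(y in I) ((x < y) + (y < x) + (x == y)) = #|I| * #|I|.
  by under eq_bigr do under eq_bigr do rewrite trichotomy; rewrite !sum_nat_const muln1.
under eq_bigr do rewrite !big_split /=.
rewrite !big_split /= -/S exchange_big -/S (eq_bigr _ diag) sum_nat_const muln1 => S2.
by rewrite bin2 -[S]doubleK; congr _./2; rewrite -subn1 mulnBr muln1 -S2 addnK addnn.
Qed.

Lemma odd_pairs n (I : {set 'I_n}) :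
  \big[addb/false]_(x in I) \big[addb/false]_(y in I) (x < y) = odd 'C(#|I|, 2).
Proof.
rewrite -sum_ltn_pairs odd_sum; apply: eq_bigr => x _.
by rewrite odd_sum; apply: eq_bigr => y _; rewrite oddb.
Qed.

Lemma odd_bin2S_even d : ~~ odd d -> odd 'C(d.+1, 2) = odd d./2.
Proof.
move=> ev; rewrite bin2odd //= ?negbK // oddM /=.
by rewrite -{1}(odd_double_half d) (negbTE ev) add0n odd_double.
Qed.

Lemma odd_bin2SS_even d : ~~ odd d -> odd 'C(d.+2, 2) = ~~ odd d./2.
Proof. by move=> ev; rewrite binS bin1 oddD odd_bin2S_even // /= (negbTE ev) addbT. Qed.

Lemma odd_inv_onT n (s : 'S_n) : odd_inv_on s [set: 'I_n] = odd_perm s.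
Proof.
rewrite -odd_inv_perm /odd_inv_on; under eq_bigl do rewrite in_setT.
by apply: eq_bigr => i _; under eq_bigl do rewrite in_setT.
Qed.

Definition inverts n (s : 'S_n) (x y : 'I_n) : bool := (x < y) (+) (s x < s y).

Lemma odd_inv_onU1 n (s : 'S_n) (T : {set 'I_n}) x : x \notin T ->
  odd_inv_on s (x |: T) = odd_inv_on s T (+) \big[addb/false]_(y in T) inverts s x y.
Proof.
move=> xT; rewrite /odd_inv_on (big_setU1 _ xT) (big_setU1 _ xT) /= ltnn /=.
rewrite [X in _ (+) X](eq_bigr _ (fun i _ => big_setU1 _ xT)) /=.
rewrite big_split /= addbA addbC; congr (_ (+) _).
rewrite -big_split /=; apply: eq_bigr => y yT.
have yx : (y : nat) != x by apply: contraNneq xT => /val_inj <-.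
have syx : (s y : nat) != s x by apply: contraNneq xT => /val_inj /perm_inj <-.
by rewrite /inverts; case: (ltngtP x y) yx => // _ _; case: (ltngtP (s x) (s y)) syx.
Qed.

Lemma sum_ord_gtn a n : \sum_(y < n) (a < y) = n - a.+1.
Proof.
elim: n => [|n IH]; first by rewrite big_ord0.
by rewrite big_ord_recr /= IH; case: (ltnP a n) => h; lia.
Qed.

Lemma inverts_all n (s : 'S_n) (a : 'I_n) :
  \big[addb/false]_(y < n) inverts s a y = odd (n - a.+1) (+) odd (n - (s a).+1).
Proof.
rewrite /inverts big_split /=; congr addb.
  by rewrite -sum_ord_gtn odd_sum; apply: eq_bigr => i _; rewrite oddb.
rewrite -sum_ord_gtn odd_sum [RHS](reindex_inj (@perm_inj _ s)) /=.
by apply: eq_bigr => i _; rewrite oddb.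
Qed.

Lemma even_on_subsets_full d (s : 'S_d.+1) : even_on_subsets d s = ~~ odd_perm s.
Proof.
have cT : #|[set: 'I_d.+1]| = d.+1 by rewrite cardsT card_ord.
apply/forall_inP/idP => [/(_ _ (introT eqP cT)) | even_s I /eqP cI].
  by rewrite odd_inv_onT.
have -> : I = [set: 'I_d.+1] by apply/eqP; rewrite eqEcard subsetT cI cT /=.
by rewrite odd_inv_onT.
Qed.

Lemma odd_inv_on_setTD1 d (s : 'S_d.+2) (a : 'I_d.+2) : ~~ odd d ->
  odd_inv_on s ([set: 'I_d.+2] :\ a) = odd_perm s (+) odd a (+) odd (s a).
Proof.
move=> ev; rewrite -odd_inv_onT -[in RHS](setD1K (in_setT a)).
rewrite odd_inv_onU1; last by rewrite !inE eqxx.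
have -> : \big[addb/false]_(y in [set: 'I_d.+2] :\ a) inverts s a y
    = \big[addb/false]_(y < d.+2) inverts s a y.
  by rewrite [RHS](bigD1 a) //= /inverts !ltnn /=; apply: eq_bigl => y; rewrite !inE andbT.
rewrite inverts_all !oddB ?ltn_ord //= (negbTE ev) /=.
by case: (odd_inv_on _ _); case: (odd a); case: (odd (s a)).
Qed.

Definition parity_shift n (s : 'S_n) : bool := [forall a, odd (s a) == odd a (+) odd_perm s].

Lemma even_on_subsets_codim1 d (s : 'S_d.+2) : ~~ odd d -> even_on_subsets d s = parity_shift s.
Proof.
move=> ev; have cD1 a : #|[set: 'I_d.+2] :\ a| = d.+1.
  by have := cardsD1 a [set: 'I_d.+2]; rewrite in_setT cardsT card_ord; case.
apply/forall_inP/forallP => [E a | P I /eqP cI].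
  have := E _ (introT eqP (cD1 a)); rewrite odd_inv_on_setTD1 //.
  by case: (odd_perm s); case: (odd a); case: (odd (s a)).
have /cards1P [a Ea] : #|~: I| == 1 by rewrite cardsCs setCK card_ord cI subSnn.
have -> : I = [set: 'I_d.+2] :\ a by rewrite setTD -Ea setCK.
rewrite odd_inv_on_setTD1 // (eqP (P a)).
by case: (odd_perm s); case: (odd a).
Qed.

Lemma srevE n (a : 'I_n) : srev n a = rev_ord a.
Proof. by rewrite permE. Qed.

Lemma srevK n : (srev n * srev n = 1)%g.
Proof. by apply/permP => a; rewrite permM !srevE rev_ordK perm1. Qed.

Lemma srevV n : ((srev n)^-1 = srev n)%g.
Proof. by apply/eqP; rewrite eq_invg_mul srevK. Qed.

Lemma mem_cycle_srev n (y : 'S_n) : (y \in <[srev n]>)%g = (y == 1%g) || (y == srev n).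
Proof.
have srev2 : (srev n ^+ 2 = 1)%g by rewrite expgS expg1 srevK.
apply/cycleP/orP => [[k ->] | [] /eqP ->]; [ | by exists 0 | by exists 1].
by rewrite -(expg_mod _ srev2) modn2; case: (odd k); [right | left].
Qed.

Lemma mem_mul_cycle_srev n (X : {set 'S_n}) (s : 'S_n) :
  (s \in X * <[srev n]>)%g = (s \in X) || ((s * srev n)%g \in X).
Proof.
apply/mulsgP/orP => [[t u tX] | [sX | tX]].
- rewrite mem_cycle_srev => /orP [] /eqP -> ->; first by left; rewrite mulg1.
  by right; rewrite -mulgA srevK mulg1.
- by exists s 1%g; rewrite ?group1 ?mulg1.
- by exists (s * srev n)%g (srev n); rewrite ?cycle_id // -mulgA srevK mulg1.
Qed.

Lemma odd_srev n (a : 'I_n) : odd (srev n a) = ~~ odd n (+) odd a.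
Proof.
by rewrite srevE /= oddB ?ltn_ord //=; case: (odd n); case: (odd a).
Qed.

Lemma odd_inv_on_mulsrev n (s : 'S_n) (I : {set 'I_n}) :
  odd_inv_on (s * srev n)%g I = odd 'C(#|I|, 2) (+) odd_inv_on s I.
Proof.
rewrite -odd_pairs /odd_inv_on -big_split /=; apply: eq_bigr => x _.
rewrite -big_split /=; apply: eq_bigr => y _.
rewrite !permM !srevE /=.
have sxy : ((s x : nat) == s y) = ((x : nat) == y) by rewrite !val_eqE (inj_eq perm_inj).
have := ltn_ord (s x); have := ltn_ord (s y).
by case: (ltngtP x y) sxy => [xy | xy | /val_inj ->] sxy; rewrite ?ltnn //=;
  case: (ltngtP (s x) (s y)) sxy => //= *; lia.
Qed.

Lemma odd_perm_srev n : odd_perm (srev n) = odd 'C(n, 2).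
Proof.
rewrite -odd_inv_onT -[srev n]mul1g odd_inv_on_mulsrev cardsT card_ord.
rewrite /odd_inv_on big1 ?addbF // => x _; rewrite big1 // => y _.
by rewrite !perm1; case: ltngtP.
Qed.

Lemma parity_shiftE n (s : 'S_n) : ~~ odd n ->
  parity_shift s = if odd_perm s then (s * srev n)%g \in SS n else s \in SS n.
Proof.
move=> ev; rewrite /parity_shift !inE.
case: (odd_perm s); apply: eq_forallb => a; rewrite ?addbF //.
by rewrite permM odd_srev ev; case: (odd (s a)); case: (odd a).
Qed.

Lemma mulsrev_SS_notin n (s : 'S_n) : ~~ odd n -> (0 < n)%N ->
  (s * srev n)%g \in SS n -> s \notin SS n.
Proof.
move=> ev n0; rewrite !inE => /forallP /(_ (Ordinal n0)); rewrite permM odd_srev ev /=.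
by apply: contraL => /forallP /(_ (Ordinal n0)) /eqP ->.
Qed.

Lemma odd_perm_parts n (t : 'S_n) : t \in SS n ->
  odd_perm (omega_part t) (+) odd_perm (pi_part t) = odd_perm t.
Proof.
rewrite inE => /forallP tS.
have N1 : t \in 'N([set i : 'I_n | odd i] | 'P)%g.
  by apply/astabsP => x; rewrite !inE /= (eqP (tS x)).
have N2 : t \in 'N([set i : 'I_n | ~~ odd i] | 'P)%g.
  by apply/astabsP => x; rewrite !inE /= (eqP (tS x)).
suff tE : t = (omega_part t * pi_part t)%g by rewrite [in RHS]tE odd_permM.
apply/permP => x; rewrite permM /omega_part /pi_part.
case: (boolP (odd x)) => ox.
- rewrite (restr_permE N1) ?inE // (out_perm (restr_perm_on _ _)) //.
  by rewrite inE (eqP (tS x)) ox.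
- rewrite (@out_perm _ _ _ x (restr_perm_on _ _)) ?inE //.
  by rewrite (restr_permE N2) ?inE.
Qed.

Lemma phi_oddE n (s : 'S_n) : s \in SSs n ->
  phi_odd s = odd_perm s (+) (s \notin SS n) && ~~ odd_perm (srev n).
Proof.
rewrite /SSs mem_mul_cycle_srev /phi_odd srevV.
case: (boolP (s \in SS n)) => [sS | _ tS] /=; first by rewrite odd_perm_parts // !addbF.
rewrite odd_perm_parts // odd_permM.
by case: (odd_perm s); case: (odd_perm (srev n)).
Qed.

Lemma mem_AltSS_srev d (s : 'S_d.+2) : ~~ odd d -> ~~ odd d./2 ->
  (s \in ('Alt_('I_d.+2) :&: SS d.+2) * <[srev d.+2]>)%g = parity_shift s.
Proof.
move=> ev ev2; have srev_odd : odd_perm (srev d.+2) by rewrite odd_perm_srev odd_bin2SS_even.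
rewrite mem_mul_cycle_srev parity_shiftE /= ?ev //.
rewrite in_setI Alt_even in_setI Alt_even odd_permM srev_odd.
by case: (odd_perm s); rewrite ?andbF ?orbF.
Qed.

Lemma mem_ker_phi d (s : 'S_d.+2) : ~~ odd d -> odd d./2 -> (s \in ker_phi d.+2) = parity_shift s.
Proof.
move=> ev od2; have srev_even : ~~ odd_perm (srev d.+2).
  by rewrite odd_perm_srev odd_bin2SS_even // negbK.
have excl : (s * srev d.+2)%g \in SS d.+2 -> s \notin SS d.+2.
  by apply: mulsrev_SS_notin => //=; rewrite !negbK.
rewrite inE parity_shiftE /= ?ev //.
case SSs_s : (s \in SSs d.+2) => /=; last first.
  move: SSs_s; rewrite /SSs mem_mul_cycle_srev => /norP [/negbTE -> /negbTE ->].
  by case: odd_perm.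
rewrite phi_oddE // srev_even andbT.
move: SSs_s excl; rewrite /SSs mem_mul_cycle_srev.
by case: (odd_perm s) (s \in SS d.+2) ((s * srev d.+2)%g \in SS d.+2) => [] [] [] //= _ ->.
Qed.

(** * Rotations and reflections *)

Lemma val_ordS n (u : 'I_n) : ordS u = (if u.+1 < n then u.+1 else 0) :> nat.
Proof.
rewrite /=; case: ltnP => [/modn_small // | un].
have -> : u.+1 = n by apply/eqP; rewrite eqn_leq un ltn_ord.
by rewrite modnn.
Qed.

Definition cshift n : 'S_n := perm (@ordS_inj n).

Lemma cshiftE n (a : 'I_n) : cshift n a = ordS a.
Proof. by rewrite permE. Qed.

Lemma cshift_expE n j (a : 'I_n) : (cshift n ^+ j)%g a = (a + j) %% n :> nat.
Proof.
elim: j => [|j IH]; first by rewrite expg0 perm1 addn0 modn_small.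
by rewrite expgSr permM cshiftE /= IH -addn1 modnDml addn1 addnS.
Qed.

Lemma cshift_expn n : (cshift n ^+ n = 1)%g.
Proof. by apply/permP => a; apply: val_inj; rewrite /= cshift_expE perm1 modnDr modn_small. Qed.

Lemma order_cshift n : (0 < n)%N -> #[cshift n]%g = n.
Proof.
move=> n0; apply/eqP; rewrite eqn_dvd order_dvdn cshift_expn eqxx /=.
have := expg_order (cshift n) => /permP /(_ (Ordinal n0)) /(congr1 (@nat_of_ord n)).
by rewrite cshift_expE perm1 /= add0n => /eqP.
Qed.

Lemma mem_cycle_cshift n (s : 'S_n) : (0 < n)%N ->
  reflect (exists2 j, (j < n)%N & s = (cshift n ^+ j)%g) (s \in <[cshift n]>%g).
Proof.
move=> n0; apply: (iffP (@cycleP _ (cshift n) s)) => [[k ->] | [j _ ->]]; last by exists j.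
by exists (k %% n); rewrite ?ltn_pmod // expg_mod // cshift_expn.
Qed.

Lemma ordS_srev n (u : 'I_n) : ordS (srev n (ordS u)) = srev n u.
Proof.
apply: ord_inj; rewrite val_ordS !srevE /=.
have := ltn_ord u; case: (ltnP u.+1 n) => un un'.
  by rewrite modn_small //; case: ltnP => ?; lia.
have -> : u.+1 = n by lia.
by rewrite modnn; case: ltnP => ?; lia.
Qed.

Lemma conjg_cshift_srev n : (cshift n ^ srev n = (cshift n)^-1)%g.
Proof.
apply/permP => a; apply: (@perm_inj _ (cshift n)); rewrite permKV.
by rewrite /conjg srevV !permM !cshiftE ordS_srev !srevE rev_ordK.
Qed.

Lemma srev_notin_cycle_cshift n : (2 < n)%N -> srev n \notin <[cshift n]>%g.
Proof.
move=> n2; apply/negP => /cycleP [k /permP E].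
have /(congr1 (@nat_of_ord n)) := E (Ordinal (ltnW (ltnW n2))).
have /(congr1 (@nat_of_ord n)) := E (Ordinal (ltnW n2)).
rewrite !srevE !cshift_expE /= add0n => E1 E0.
move: E1; rewrite addnC -addn1 -modnDml -E0 subnK ?modnn; lia.
Qed.

Lemma order_involution (gT : finGroupType) (x : gT) : (x * x = 1)%g -> x != 1%g -> #[x]%g = 2.
Proof.
move=> xx x1; apply/(prime_nt_dvdP _ _) => //; first by rewrite order_eq1.
by rewrite order_dvdn expgS expg1 xx.
Qed.

Lemma srev_neq1 n : (2 < n)%N -> srev n != 1%g.
Proof. by move=> n2; apply: contraNneq (srev_notin_cycle_cshift n2) => ->; apply: group1. Qed.

Lemma cshift_srev_involutive n : (cshift n * srev n * (cshift n * srev n) = 1)%g.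
Proof.
have srev_cshift_srev : (srev n * (cshift n * srev n) = (cshift n)^-1)%g.
  by rewrite -conjg_cshift_srev /conjg srevV.
by rewrite -mulgA srev_cshift_srev mulgV.
Qed.

Lemma mul_cycle_cshift_srev n :
  (<[cshift n]> * <[srev n]>)%g = <<[set srev n; (cshift n * srev n)%g]>>%g.
Proof.
rewrite -norm_joinEr ?norms_cycle ?conjg_cshift_srev ?groupV ?cycle_id //.
set G := <<_>>%g; set J := (_ <*> _)%g.
have srevG : srev n \in G by rewrite mem_gen ?set21.
have cshiftG : cshift n \in G.
  by rewrite -(mulgK (srev n) (cshift n)) groupM ?groupV // mem_gen ?set22.
have cshiftJ : cshift n \in J by rewrite (subsetP (joing_subl _ _)) ?cycle_id.
have srevJ : srev n \in J by rewrite (subsetP (joing_subr _ _)) ?cycle_id.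
apply/eqP; rewrite eqEsubset join_subG !cycle_subG cshiftG srevG gen_subG subUset !sub1set.
by rewrite srevJ groupM.
Qed.

Lemma card_mul_cycle_cshift_srev n : (2 < n)%N -> #|(<[cshift n]> * <[srev n]>)%g| = (2 * n)%N.
Proof.
move=> n2; have TI : (<[cshift n]> :&: <[srev n]> = 1)%g.
  apply/trivgP/subsetP => x /setIP [xr]; rewrite mem_cycle_srev => /orP [] /eqP xE.
    by rewrite xE group1.
  by move: xr; rewrite xE (negbTE (srev_notin_cycle_cshift n2)).
rewrite TI_cardMg // -!orderE order_cshift; last by lia.
by rewrite (order_involution (srevK n)) ?srev_neq1 // mulnC.
Qed.

Lemma cshift_srev_dihedral n : (2 < n)%N -> (<[cshift n]> * <[srev n]>)%g \isog 'D_(2 * n).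
Proof.
move=> n2; rewrite -(card_mul_cycle_cshift_srev n2) mul_cycle_cshift_srev.
have cshift_srev_neq1 : (cshift n * srev n != 1)%g.
  apply: contraNneq (srev_notin_cycle_cshift n2) => /eqP; rewrite -eq_invg_mul => /eqP <-.
  by rewrite groupV cycle_id.
apply: involutions_gen_dihedral.
- exact: order_involution (srevK n) (srev_neq1 n2).
- exact: order_involution (cshift_srev_involutive n) cshift_srev_neq1.
- apply/eqP => E; have cshift1 : cshift n = 1%g by apply: (mulIg (srev n)); rewrite mul1g -E.
  by move: (order_cshift (ltnW (ltnW n2))); rewrite cshift1 order1; lia.
Qed.

(** * The case n >= d + 3 *)

Lemma even_pairs_across (T : finType) (I : {set T}) (A : pred T) : odd #|I| ->
  ~~ \big[addb/false]_(x in I) \big[addb/false]_(y in I) (A x && ~~ A y).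
Proof.
move=> oI; rewrite -big_distrlr /=.
have : \big[addb/false]_(x in I) A x (+) \big[addb/false]_(x in I) ~~ A x = odd #|I|.
  by rewrite -big_split -sum1_card odd_sum; apply: eq_bigr => x _; case: (A x).
by rewrite oI; case: (\big[addb/false]_(x in I) A x); case: (\big[addb/false]_(x in I) ~~ A x).
Qed.

Lemma cshift_exp_inverted n j (x y : 'I_n) : (j < n)%N ->
  (x < y) && ((cshift n ^+ j)%g y < (cshift n ^+ j)%g x) = (x < n - j) && ~~ (y < n - j).
Proof.
move=> jn; rewrite !cshift_expE.
have modE (a : 'I_n) : (a + j) %% n = if a + j < n then a + j else a + j - n.
  case: ltnP => [/modn_small // | aj].
  by rewrite -{1}(subnK aj) modnDr modn_small //; have := ltn_ord a; lia.
rewrite !modE; have := ltn_ord x; have := ltn_ord y.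
by do 2![case: ifP => ?]; case: ltngtP => /= *; lia.
Qed.

Lemma even_on_subsets_cshift d n j : ~~ odd d -> (j < n)%N -> even_on_subsets d (cshift n ^+ j)%g.
Proof.
move=> ev jn; apply/forall_inP => I /eqP cI.
rewrite /odd_inv_on; under eq_bigr do under eq_bigr do rewrite cshift_exp_inverted //.
by apply: (even_pairs_across (fun x : 'I_n => x < n - j)); rewrite cI /= ev.
Qed.

Lemma odd_inv_on_cshift_srev d n j (I : {set 'I_n}) : ~~ odd d -> (j < n)%N -> #|I| = d.+1 ->
  odd_inv_on (cshift n ^+ j * srev n)%g I = odd d./2.
Proof.
move=> ev jn cI; rewrite odd_inv_on_mulsrev cI odd_bin2S_even //.
have /forall_inP /(_ I (introT eqP cI)) /negbTE -> := even_on_subsets_cshift ev jn.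
by rewrite addbF.
Qed.

Lemma even_subsets_const (T : finType) (U : {set T}) (P : pred T) k :
  (0 < k)%N -> (k < #|U|)%N ->
  (forall S : {set T}, S \subset U -> #|S| = k -> ~~ \big[addb/false]_(y in S) P y) ->
  {in U &, forall x y, P x = P y}.
Proof.
move=> k0 kU even x y xU yU; apply: contraTeq isT => Pxy.
have xy : x != y by apply: contraNneq Pxy => ->.
have cV : (k.-1 <= #|U :\ x :\ y|)%N.
  have := cardsD1 x U; have := cardsD1 y (U :\ x).
  by rewrite xU !inE eq_sym xy yU; lia.
have /card_gt0P [S] : (0 < #|[set S : {set T} | S \subset U :\ x :\ y & #|S| == k.-1]|)%N.
  by rewrite cards_draws bin_gt0.
rewrite inE => /andP [/subsetP SV /eqP cS].
have [xS yS] : x \notin S /\ y \notin S.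
  by split; apply/negP => /SV; rewrite !inE eqxx ?andbF.
have SU : S \subset U by apply/subsetP => z /SV; rewrite !inE => /and3P [].
have card_add z : z \notin S -> #|z |: S| = k by move=> zS; rewrite cardsU1 zS cS add1n prednK.
have := even (x |: S) _ (card_add x xS); have := even (y |: S) _ (card_add y yS).
rewrite !subUset !sub1set SU xU yU !big_setU1 //=.
case: (P x) (P y) Pxy => [] [] //= _.
all: by case: (\big[addb/false]_(z in S) P z) => /(_ isT) + /(_ isT).
Qed.

Lemma even_on_subsets_between d n (s : 'S_n) (a b : 'I_n) :
  even_on_subsets d s -> (b : nat) = a.+1 ->
  forall T : {set 'I_n}, a \notin T -> b \notin T -> #|T| = d ->
  ~~ \big[addb/false]_(y in T) ((s a < s y) (+) (s b < s y)).
Proof.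
move=> /forall_inP even ab T aT bT cT.
have := even (a |: T); have := even (b |: T).
rewrite !cardsU1 aT bT cT add1n eqxx => /(_ isT) + /(_ isT).
rewrite !odd_inv_onU1 //.
have -> : \big[addb/false]_(y in T) ((s a < s y) (+) (s b < s y))
    = \big[addb/false]_(y in T) inverts s a y (+) \big[addb/false]_(y in T) inverts s b y.
  rewrite -big_split; apply: eq_bigr => y yT; rewrite /inverts.
  have yb : (y : nat) != b by apply: contraNneq bT => /val_inj <-.
  have ya : (y : nat) != a by apply: contraNneq aT => /val_inj <-.
  have -> : (b < y) = (a < y) by rewrite ab; case: ltngtP ya yb => //= *; lia.
  by case: (a < y); case: (s a < s y); case: (s b < s y).
by case: (odd_inv_on s T); case: (\big[addb/false]_(y in T) inverts s a y);
  case: (\big[addb/false]_(y in T) inverts s b y).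
Qed.

Lemma between_const_adjacent n (u v : 'I_n) : u != v ->
  {in ~: [set u; v] &, forall w z : 'I_n, (u < w) (+) (v < w) = (u < z) (+) (v < z)} ->
  (v == ordS u) || (u == ordS v).
Proof.
move=> uv const; apply: contraT; rewrite negb_or => /andP [nvu nuv].
move: nvu nuv; rewrite -(inj_eq (@ord_inj n)) -[u == _](inj_eq (@ord_inj n)) !val_ordS => nvu nuv.
have un := ltn_ord u; have vn := ltn_ord v; have uv' : (u : nat) != v by [].
have mM : (minn u v).+1 < maxn u v by move: nvu nuv; case: ifP; case: ifP => *; lia.
have ends : (0 < minn u v) || ((maxn u v).+1 < n).
  by move: nvu nuv; case: ifP; case: ifP => *; lia.
have wn : (minn u v).+1 < n by lia.
have [z [zn zu zv zout]] : exists z : nat,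
    [/\ z < n, z != u, z != v & ~~ ((u < z) (+) (v < z))].
  by case/orP: ends => h; [exists 0 | exists (maxn u v).+1]; split => //; lia.
have w_new : ~~ (((minn u v).+1 == u) || ((minn u v).+1 == v)) by apply/norP; split; lia.
have z_new : ~~ ((z == u) || (z == v)) by rewrite negb_or zu zv.
have := const (Ordinal wn) (Ordinal zn); rewrite !inE -!val_eqE /= => /(_ w_new z_new).
rewrite (negbTE zout).
by case: (ltnP u (minn u v).+1); case: (ltnP v (minn u v).+1) => //= *; lia.
Qed.

Definition cyc_adjacent n (s : 'S_n) : Prop :=
  forall a b : 'I_n, b = a.+1 :> nat -> (s b == ordS (s a)) || (s a == ordS (s b)).

Lemma even_on_subsets_adjacent d n (s : 'S_n) : (0 < d)%N -> (d.+3 <= n)%N ->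
  even_on_subsets d s -> cyc_adjacent s.
Proof.
move=> d0 dn even a b ab.
have ba : b != a by apply/eqP => /(congr1 (@nat_of_ord n)); rewrite ab; lia.
have cU : #|~: [set a; b]| = n - 2.
  by have := cardsC [set a; b]; rewrite cards2 eq_sym ba card_ord; lia.
have const : {in ~: [set a; b] &, forall y z,
    (s a < s y) (+) (s b < s y) = (s a < s z) (+) (s b < s z)}.
  apply: (even_subsets_const d0 (P := fun y => (s a < s y) (+) (s b < s y))).
    by rewrite cU; lia.
  move=> S /subsetP SU cS; apply: (even_on_subsets_between even ab) => //.
    by apply/negP => /SU; rewrite !inE eqxx.
  by apply/negP => /SU; rewrite !inE eqxx orbT.
have preim y : y \in ~: [set s a; s b] -> (s^-1)%g y \in ~: [set a; b].
  by rewrite !inE !(canF_eq (permKV s)).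
apply: between_const_adjacent; first by rewrite (inj_eq perm_inj) eq_sym.
move=> w z /preim wN /preim zN.
by have := const _ _ wN zN; rewrite !permKV.
Qed.

Lemma srev_eq_ordS n (u v : 'I_n) : (srev n v == ordS (srev n u)) = (u == ordS v).
Proof. by rewrite -[srev n v]ordS_srev (inj_eq (@ordS_inj n)) (inj_eq perm_inj) eq_sym. Qed.

Lemma cyc_adjacent_mulsrev n (s : 'S_n) : cyc_adjacent s -> cyc_adjacent (s * srev n)%g.
Proof. by move=> adj a b ab; rewrite !permM !srev_eq_ordS orbC; apply: adj. Qed.

Lemma cyc_adjacent_cshift n (s : 'S_n) (a0 a1 : 'I_n) : a0 = 0 :> nat -> a1 = 1 :> nat ->
  cyc_adjacent s -> s a1 = ordS (s a0) -> s = (cshift n ^+ s a0)%g.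
Proof.
move=> a00 a11 adj s01; set j := nat_of_ord (s a0).
have step i : (i.+1 < n)%N ->
    forall x y : 'I_n, x = i :> nat -> y = i.+1 :> nat -> s y = ordS (s x).
  elim: i => [_ x y x0 y1 | i IH lt x y xi yi].
    have -> : x = a0 by apply: ord_inj; rewrite x0 a00.
    by have -> : y = a1 by apply: ord_inj; rewrite y1 a11.
  have w_lt : (i < n)%N by lia.
  have IHx := IH (ltnW lt) (Ordinal w_lt) x erefl xi.
  have yx : y = x.+1 :> nat by rewrite yi xi.
  case/orP: (adj x y yx) => /eqP // E.
  have : Ordinal w_lt = y by apply: (@perm_inj _ s); apply: (@ordS_inj n); rewrite -IHx E.
  by move/(congr1 (@nat_of_ord n)); rewrite yi /=; lia.
have val_s i : forall x : 'I_n, x = i :> nat -> s x = (i + j) %% n :> nat.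
  elim: i => [x x0 | i IH x xi].
    have -> : x = a0 by apply: ord_inj; rewrite x0 a00.
    by rewrite add0n modn_small ?ltn_ord.
  have xn := ltn_ord x; rewrite xi in xn.
  have w_lt : (i < n)%N by lia.
  by rewrite (step i xn (Ordinal w_lt) x erefl xi) /= IH // -addn1 modnDml addn1 addSn.
by apply/permP => x; apply: ord_inj; rewrite cshift_expE (val_s x).
Qed.

Lemma cyc_adjacent_dihedral n (s : 'S_n) : (1 < n)%N -> cyc_adjacent s ->
  exists2 j, (j < n)%N & s = (cshift n ^+ j)%g \/ s = (cshift n ^+ j * srev n)%g.
Proof.
move=> n1 adj; pose a0 := Ordinal (ltnW n1); pose a1 := Ordinal n1.
case/orP: (adj a0 a1 erefl) => /eqP s01.
  by exists (s a0) => //; left; apply: (cyc_adjacent_cshift (a0 := a0) (a1 := a1)).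
have adj' := cyc_adjacent_mulsrev adj.
have s01' : (s * srev n)%g a1 = ordS ((s * srev n)%g a0).
  by apply/eqP; rewrite !permM srev_eq_ordS s01.
exists ((s * srev n)%g a0) => //; right.
by rewrite -(cyc_adjacent_cshift (a0 := a0) (a1 := a1) _ _ adj' s01') // -mulgA srevK mulg1.
Qed.

Lemma Cdn_cycle (R : realType) d n : ~~ odd d -> (0 < d)%N -> (d.+3 <= n)%N -> odd d./2 ->
  Cdn R d n = <[cshift n]>%g.
Proof.
move=> ev d0 dn od2; have n0 : (0 < n)%N by lia.
have n1 : (1 < n)%N by lia.
apply/setP => s; rewrite mem_Cdn; apply/idP/(mem_cycle_cshift _ n0) => [E | [j jn ->]].
  have [j jn [-> | sE]] := cyc_adjacent_dihedral n1 (even_on_subsets_adjacent d0 dn E).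
    by exists j.
  have /card_gt0P [I] : (0 < #|[set I : {set 'I_n} | #|I| == d.+1]|)%N.
    by rewrite card_draws bin_gt0 card_ord; lia.
  rewrite inE => /eqP cI; move: E => /forall_inP /(_ I (introT eqP cI)).
  by rewrite sE (odd_inv_on_cshift_srev ev jn cI) od2.
exact: even_on_subsets_cshift.
Qed.

Lemma Cdn_dihedral (R : realType) d n : ~~ odd d -> (0 < d)%N -> (d.+3 <= n)%N -> ~~ odd d./2 ->
  Cdn R d n = (<[cshift n]> * <[srev n]>)%g.
Proof.
move=> ev d0 dn ev2; have n0 : (0 < n)%N by lia.
have n1 : (1 < n)%N by lia.
apply/setP => s; rewrite mem_Cdn mem_mul_cycle_srev; apply/idP/orP => [E | ].
  have [j jn [-> | ->]] := cyc_adjacent_dihedral n1 (even_on_subsets_adjacent d0 dn E).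
    by left; apply/mem_cycle_cshift => //; exists j.
  by right; rewrite -mulgA srevK mulg1; apply/mem_cycle_cshift => //; exists j.
case=> /(mem_cycle_cshift _ n0) [j jn sE]; first by rewrite sE even_on_subsets_cshift.
rewrite -[s]mulg1 -(srevK n) mulgA sE; apply/forall_inP => I /eqP cI.
by rewrite (odd_inv_on_cshift_srev ev jn cI) (negbTE ev2).
Qed.

Theorem proposition3p10 (R : realType) (d n : nat) :
  (0 < d)%N -> ~~ odd d -> (d.+1 <= n)%N ->
  [/\ (n = d.+1 -> Cdn R d n = ('Alt_('I_n))%g),
      (n = d.+2 -> ~~ odd d./2 ->
         Cdn R d n = (('Alt_('I_n) :&: SS n) * <[srev n]>)%g),
      (n = d.+2 -> odd d./2 -> Cdn R d n = ker_phi n),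
      ((d.+3 <= n)%N -> ~~ odd d./2 -> (Cdn R d n \isog 'D_(2 * n))%g) &
      ((d.+3 <= n)%N -> odd d./2 -> (Cdn R d n \isog Zp n)%g)].
Proof.
move=> d0 ev _; split.
- move=> ->; apply/setP => s.
  by rewrite mem_Cdn even_on_subsets_full Alt_even.
- move=> -> ev2; apply/setP => s.
  by rewrite mem_Cdn even_on_subsets_codim1 // mem_AltSS_srev.
- move=> -> od2; apply/setP => s.
  by rewrite mem_Cdn even_on_subsets_codim1 // mem_ker_phi.
- move=> d3 ev2; rewrite (Cdn_dihedral R ev d0 d3 ev2).
  by apply: cshift_srev_dihedral; lia.
- move=> d3 od2; rewrite (Cdn_cycle R ev d0 d3 od2) isog_sym.
  by have := Zp_isog (cshift n); rewrite order_cshift //; lia.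
Qed.
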